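(* Let $N\ge 2$ be an integer and $\kappa,m>0$. For every fixed $k_1\in\mathbb{Z}\cap(0,N)$, $$\sum_{\substack{k_2,k_3,k_4\in\mathbb{Z}\cap(0,N)\\ k_1-k_2-k_3-k_4\equiv 0\ (\mathrm{mod}\ N)}}\big|A^{(1)}_{1,2,3,4}\big|^2+\sum_{\substack{k_2,k_3,k_4\in\mathbb{Z}\cap(0,N)\\ k_1-k_2+k_3+k_4\equiv 0\ (\mathrm{mod}\ N)}}\big|A^{(2)}_{1,2,3,4}\big|^2+\sum_{\substack{k_2,k_3,k_4\in\mathbb{Z}\cap(0,N)\\ k_1+k_2+k_3+k_4\equiv 0\ (\mathrm{mod}\ N)}}\big|A^{(3)}_{1,2,3,4}\big|^2\le C\,N^2\log N,$$ where $C>0$ is a constant depending only on $\kappa$ and $m$ (in particular independent of $N$ and $k_1$).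
   Context: For an integer $N\ge 2$ and constants $\kappa,m>0$, define for $k\in\mathbb{Z}$ the frequency $\omega_k=2\sqrt{\kappa/m}\,\big|\sin(\pi k/N)\big|$ and the $2N$-periodic sign function $\iota(x)=\operatorname{sgn}\sin(\pi x/N)$. For integers $k_1,k_2,k_3,k_4$ (abbreviated by their indices $1,2,3,4$) set $$T_{1,2,3,4}=-\frac{3}{4\kappa^2}\,\iota(k_2+k_3+k_4)\,\iota(k_2)\,\iota(k_3)\,\iota(k_4)\prod_{i=1}^4\sqrt{\omega_{k_i}},$$ and let $T_{1,-2,3,4}$ denote the same expression with $k_2$ replaced by $-k_2$, i.e. $-\frac{3}{4\kappa^2}\iota(-k_2+k_3+k_4)\iota(-k_2)\iota(k_3)\iota(k_4)\prod_{i=1}^4\sqrt{\omega_{k_i}}$. Define $$A^{(1)}_{1,2,3,4}=-\frac{T_{1,2,3,4}}{\omega_{k_1}-\omega_{k_2}-\omega_{k_3}-\omega_{k_4}},\quad A^{(2)}_{1,2,3,4}=-\frac{T_{1,-2,3,4}}{\omega_{k_1}-\omega_{k_2}+\omega_{k_3}+\omega_{k_4}},\quad A^{(3)}_{1,2,3,4}=-\frac{T_{1,2,3,4}}{\omega_{k_1}+\omega_{k_2}+\omega_{k_3}+\omega_{k_4}}.$$ On the respective summation ranges (all $k_i\in\mathbb{Z}\cap(0,N)$ with the stated congruence mod $N$) the denominators do not vanish. These are the coefficients of the normal form transformation removing non-resonant quartic terms in the $\beta$-FPUT chain. *)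

From Stdlib Require Import Reals ZArith List.
Open Scope R_scope.

Definition sgn (r : R) : R :=
  if Rlt_dec 0 r then 1 else if Rlt_dec r 0 then -1 else 0.

Definition omega (kappa m : R) (N k : Z) : R :=
  2 * sqrt (kappa / m) * Rabs (sin (PI * IZR k / IZR N)).

Definition iota (N x : Z) : R := sgn (sin (PI * IZR x / IZR N)).

Definition T (kappa m : R) (N k1 k2 k3 k4 : Z) : R :=
  - (3 / (4 * kappa ^ 2)) * iota N (k2 + k3 + k4) * iota N k2 * iota N k3 * iota N k4
  * (sqrt (omega kappa m N k1) * sqrt (omega kappa m N k2)
     * sqrt (omega kappa m N k3) * sqrt (omega kappa m N k4)).

Definition A1 kappa m N k1 k2 k3 k4 : R :=
  - T kappa m N k1 k2 k3 k4 /
    (omega kappa m N k1 - omega kappa m N k2 - omega kappa m N k3 - omega kappa m N k4).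

Definition A2 kappa m N k1 k2 k3 k4 : R :=
  - T kappa m N k1 (- k2)%Z k3 k4 /
    (omega kappa m N k1 - omega kappa m N k2 + omega kappa m N k3 + omega kappa m N k4).

Definition A3 kappa m N k1 k2 k3 k4 : R :=
  - T kappa m N k1 k2 k3 k4 /
    (omega kappa m N k1 + omega kappa m N k2 + omega kappa m N k3 + omega kappa m N k4).

Definition range (N : Z) : list Z :=
  map Z.of_nat (seq 1 (Z.to_nat N - 1)).

Definition sumZ (l : list Z) (f : Z -> R) : R := fold_right Rplus 0 (map f l).

Definition sum3 (N : Z) (c : Z -> Z -> Z -> Z) (f : Z -> Z -> Z -> R) : R :=
  sumZ (range N) (fun k2 => sumZ (range N) (fun k3 => sumZ (range N) (fun k4 =>
    if Z.eq_dec (Z.modulo (c k2 k3 k4) N) 0 then f k2 k3 k4 else 0))).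

Definition Ssum (kappa m : R) (N k1 : Z) : R :=
  sum3 N (fun k2 k3 k4 => k1 - k2 - k3 - k4)%Z
       (fun k2 k3 k4 => Rabs (A1 kappa m N k1 k2 k3 k4) ^ 2)
  + sum3 N (fun k2 k3 k4 => k1 - k2 + k3 + k4)%Z
       (fun k2 k3 k4 => Rabs (A2 kappa m N k1 k2 k3 k4) ^ 2)
  + sum3 N (fun k2 k3 k4 => k1 + k2 + k3 + k4)%Z
       (fun k2 k3 k4 => Rabs (A3 kappa m N k1 k2 k3 k4) ^ 2).

From Pilot Require Import Defs.
From Stdlib Require Import Reals ZArith Lra Lia Psatz List Permutation.
Open Scope R_scope.

(* Write s_k = |sin (pi k / N)|, so that omega_k = 2 sqrt(kappa/m) s_k and
   |T_{1,2,3,4}|^2 <= (3/(4 kappa^2))^2 omega_1 omega_2 omega_3 omega_4.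
   On the resonance k_1 = k_2 + k_3 + k_4 (mod N) one has
   s_1 = |sin (theta_2 + theta_3 + theta_4)|, and the trigonometric inequality
   (s_2 + s_3)(s_3 + s_4)(s_2 + s_4) <= 4 (s_2 + s_3 + s_4 - |sin (theta_2 + theta_3 + theta_4)|)
   keeps the small divisor away from zero; the same holds for A^(2) with the roles
   of k_1 and k_2 exchanged, while A^(3) has no small divisor.  Each squared
   coefficient is thus O((s_3 + s_4)^-2).  For fixed k_3, k_4 the congruence fixes
   k_2 mod N, so each triple sum is at most the double sum of (s_3 + s_4)^-2, and
   s_k >= min(k, N - k) / N bounds the latter by N^2 sum_{a,b<N} (a + b)^-2
   = O(N^2 log N). *)

(** * A trigonometric inequality *)

Lemma Rabs_sin_add_le x y :
  Rabs (sin (x + y)) <= Rabs (sin x) * Rabs (cos y) + Rabs (cos x) * Rabs (sin y).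
Proof. rewrite sin_plus, <- !Rabs_mult. apply Rabs_triang. Qed.

Lemma Rabs_sin_cos_sq x : Rabs (sin x) ^ 2 + Rabs (cos x) ^ 2 = 1.
Proof. rewrite !pow2_abs, <- !Rsqr_pow2. apply sin2_cos2. Qed.

(* Expand sin (x + (y + z)); then
   2 (1 - |cos x| |cos z|) = sin^2 x + sin^2 z + (|cos x| - |cos z|)^2. *)
Lemma sin_add3_gap x y z :
  Rabs (sin y) * (Rabs (sin x) ^ 2 + Rabs (sin z) ^ 2)
  + Rabs (sin z) * (Rabs (sin x) ^ 2 + Rabs (sin y) ^ 2)
  <= 2 * (Rabs (sin x) + Rabs (sin y) + Rabs (sin z) - Rabs (sin (x + y + z))).
Proof.
  pose proof (Rabs_sin_cos_sq x); pose proof (Rabs_sin_cos_sq y); pose proof (Rabs_sin_cos_sq z).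
  pose proof (Rabs_sin_add_le x (y + z)) as Hxyz; pose proof (Rabs_sin_add_le y z).
  rewrite <- Rplus_assoc in Hxyz.
  assert (Rabs (cos (y + z)) <= 1) by (apply Rabs_le, COS_bound).
  pose proof (Rabs_pos (sin x)); pose proof (Rabs_pos (sin y)); pose proof (Rabs_pos (sin z)).
  pose proof (Rabs_pos (cos x)).
  set (sx := Rabs (sin x)) in *; set (sy := Rabs (sin y)) in *; set (sz := Rabs (sin z)) in *.
  set (cx := Rabs (cos x)) in *; set (cy := Rabs (cos y)) in *; set (cz := Rabs (cos z)) in *.
  assert (sx * Rabs (cos (y + z)) <= sx) by nra.
  assert (cx * Rabs (sin (y + z)) <= cx * (sy * cz + cy * sz)) by nra.
  assert (Ey : sy * (sx ^ 2 + sz ^ 2) = 2 * sy * (1 - cx * cz) - sy * (cx - cz) ^ 2).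
  { replace (sx ^ 2) with (1 - cx ^ 2) by lra. replace (sz ^ 2) with (1 - cz ^ 2) by lra. ring. }
  assert (Ez : sz * (sx ^ 2 + sy ^ 2) = 2 * sz * (1 - cx * cy) - sz * (cx - cy) ^ 2).
  { replace (sx ^ 2) with (1 - cx ^ 2) by lra. replace (sy ^ 2) with (1 - cy ^ 2) by lra. ring. }
  assert (0 <= sy * (cx - cz) ^ 2) by (apply Rmult_le_pos; [assumption | apply pow2_ge_0]).
  assert (0 <= sz * (cx - cy) ^ 2) by (apply Rmult_le_pos; [assumption | apply pow2_ge_0]).
  rewrite Ey, Ez. lra.
Qed.

Definition pairsum_prod (a b c : R) : R := (a + b) * (b + c) * (a + c).

(* Sum the three cyclic instances of sin_add3_gap; what is left over is
   sx (sy - sz)^2 + sy (sx - sz)^2 + sz (sx - sy)^2 >= 0. *)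
Lemma pairsum_prod_le_sin_gap x y z :
  pairsum_prod (Rabs (sin x)) (Rabs (sin y)) (Rabs (sin z))
  <= 4 * (Rabs (sin x) + Rabs (sin y) + Rabs (sin z) - Rabs (sin (x + y + z))).
Proof.
  pose proof (sin_add3_gap x y z).
  pose proof (sin_add3_gap y z x) as Hyzx; replace (y + z + x) with (x + y + z) in Hyzx by ring.
  pose proof (sin_add3_gap z x y) as Hzxy; replace (z + x + y) with (x + y + z) in Hzxy by ring.
  pose proof (Rabs_pos (sin x)); pose proof (Rabs_pos (sin y)); pose proof (Rabs_pos (sin z)).
  unfold pairsum_prod.
  set (sx := Rabs (sin x)) in *; set (sy := Rabs (sin y)) in *; set (sz := Rabs (sin z)) in *.
  assert (0 <= sx * (sy - sz) ^ 2) by (apply Rmult_le_pos; [assumption | apply pow2_ge_0]).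
  assert (0 <= sy * (sx - sz) ^ 2) by (apply Rmult_le_pos; [assumption | apply pow2_ge_0]).
  assert (0 <= sz * (sx - sy) ^ 2) by (apply Rmult_le_pos; [assumption | apply pow2_ge_0]).
  nra.
Qed.

Lemma Rabs_sin_add_int_PI u q : Rabs (sin (u + IZR q * PI)) = Rabs (sin u).
Proof.
  assert (Hs : sin (IZR q * PI) = 0) by (apply sin_eq_0_1; exists q; reflexivity).
  rewrite sin_plus, Hs, Rmult_0_r, Rplus_0_r, Rabs_mult.
  pose proof (Rabs_sin_cos_sq (IZR q * PI)) as Hq.
  rewrite Hs, Rabs_R0 in Hq. pose proof (Rabs_pos (cos (IZR q * PI))).
  replace (Rabs (cos (IZR q * PI))) with 1 by nra. ring.
Qed.

Lemma sin_ge_third x : 0 <= x <= PI / 2 -> x / 3 <= sin x.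
Proof.
  intros Hx. pose proof PI_4.
  destruct (sin_bound x 0 ltac:(lra) ltac:(lra)) as [Hlb _].
  unfold sin_approx, sin_term in Hlb. simpl in Hlb.
  replace (1 * (x * 1 / 1) + -1 * 1 * (x * (x * (x * 1)) / (1 + 1 + 1 + 1 + 1 + 1)))
    with (x - x ^ 3 / 6) in Hlb by field.
  assert (x * x ^ 2 <= x * 4) by (apply Rmult_le_compat_l; nra).
  replace (x ^ 3) with (x * x ^ 2) in Hlb by ring. lra.
Qed.

(** * Real inequalities for the coefficient bounds *)

Lemma resonant_weight_le a b d s :
  0 <= a -> 0 <= b -> 0 <= d -> 0 <= s ->
  pairsum_prod a b d <= 4 * (a + b + d - s) ->
  s * a * b * d * (b + d) ^ 2 <= 32 * (a + b + d - s) ^ 2.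
Proof.
  unfold pairsum_prod. intros Ha Hb Hd Hs Hgap.
  assert (Hprod : 0 <= (a + b) * (b + d) * (a + d)) by (repeat apply Rmult_le_pos; lra).
  assert (Hsad : s * a * b * d <= 2 * (a + b) ^ 2 * (a + d) ^ 2).
  { assert (s * (a * (b * d)) <= (a + b + d) * (a * (b * d))) by
      (apply Rmult_le_compat_r; [repeat apply Rmult_le_pos |]; lra).
    assert (a * (a + b + d) <= 2 * (a + b) * (a + d)) by nra.
    assert (b * d <= (a + b) * (a + d)) by nra.
    assert (0 <= b * d) by nra.
    nra. }
  assert (Hsq : ((a + b) * (b + d) * (a + d)) ^ 2 <= 16 * (a + b + d - s) ^ 2) by nra.
  assert (0 <= (b + d) ^ 2) by apply pow2_ge_0.
  nra.
Qed.

Lemma nonresonant_weight_le a b d s :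
  0 <= a -> 0 <= b -> 0 <= d -> 0 <= s -> b <= 1 -> d <= 1 ->
  s * a * b * d * (b + d) ^ 2 <= 32 * (s + a + b + d) ^ 2.
Proof.
  intros Ha Hb Hd Hs Hb1 Hd1.
  assert (s * a <= (s + a + b + d) ^ 2) by nra.
  assert (b * d * (b + d) ^ 2 <= 4).
  { assert (b * d <= 1) by nra. assert ((b + d) ^ 2 <= 4) by nra.
    replace 4 with (1 * 4) by ring. apply Rmult_le_compat; nra. }
  assert (0 <= b * d * (b + d) ^ 2) by (apply Rmult_le_pos; nra).
  assert (s * a * (b * d * (b + d) ^ 2) <= (s + a + b + d) ^ 2 * 4)
    by (apply Rmult_le_compat; nra).
  nra.
Qed.

Lemma Rsqr_quotient_le T den c K L P D Q :
  0 < c -> 0 < D -> 0 < Q -> 0 <= K ->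
  T ^ 2 <= K * c ^ 4 * P -> P * Q <= L * D ^ 2 -> den ^ 2 = (c * D) ^ 2 ->
  Rabs (- T / den) ^ 2 <= K * L * c ^ 2 / Q.
Proof.
  intros Hc HD HQ HK HT HPQ Hden.
  assert (HcD : 0 < (c * D) ^ 2) by (apply pow_lt, Rmult_lt_0_compat; assumption).
  assert (den <> 0) by (intro E; rewrite E in Hden; lra).
  rewrite pow2_abs.
  replace ((- T / den) ^ 2) with (T ^ 2 * Q / ((c * D) ^ 2 * Q)) by (rewrite <- Hden; field; lra).
  replace (K * L * c ^ 2 / Q) with (K * c ^ 4 * (L * D ^ 2) / ((c * D) ^ 2 * Q))
    by (field; lra).
  unfold Rdiv. apply Rmult_le_compat_r.
  - apply Rlt_le, Rinv_0_lt_compat, Rmult_lt_0_compat; assumption.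
  - assert (0 <= K * c ^ 4) by (apply Rmult_le_pos; [assumption | apply pow_le; lra]).
    apply Rle_trans with (K * c ^ 4 * P * Q); [apply Rmult_le_compat_r; lra |].
    rewrite Rmult_assoc. apply Rmult_le_compat_l; assumption.
Qed.

Lemma Rsqr_unit_mult_le e x : Rabs e <= 1 -> (e * x) ^ 2 <= x ^ 2.
Proof.
  intros He. rewrite Rpow_mult_distr, <- (pow2_abs e).
  pose proof (Rabs_pos e). assert (Rabs e ^ 2 <= 1) by nra.
  rewrite <- (Rmult_1_l (x ^ 2)) at 2. apply Rmult_le_compat_r; [apply pow2_ge_0 | assumption].
Qed.

Lemma Rabs_mult4_le_1 a b c d :
  Rabs a <= 1 -> Rabs b <= 1 -> Rabs c <= 1 -> Rabs d <= 1 -> Rabs (a * b * c * d) <= 1.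
Proof.
  intros. rewrite !Rabs_mult.
  pose proof (Rabs_pos a); pose proof (Rabs_pos b); pose proof (Rabs_pos c); pose proof (Rabs_pos d).
  assert (Rabs a * Rabs b <= 1) by nra. assert (Rabs a * Rabs b * Rabs c <= 1) by nra. nra.
Qed.

(** * Finite sums over Z ∩ (0, N) *)

Lemma sumZ_cons x l f : sumZ (x :: l) f = f x + sumZ l f.
Proof. reflexivity. Qed.

Lemma sumZ_app l1 l2 f : sumZ (l1 ++ l2) f = sumZ l1 f + sumZ l2 f.
Proof. induction l1; [unfold sumZ; simpl; ring | simpl app; rewrite !sumZ_cons, IHl1; ring]. Qed.

Lemma sumZ_map (h : Z -> Z) l f : sumZ (map h l) f = sumZ l (fun x => f (h x)).
Proof. unfold sumZ. rewrite map_map. reflexivity. Qed.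

Lemma sumZ_0 l : sumZ l (fun _ => 0) = 0.
Proof. induction l; [reflexivity | rewrite sumZ_cons, IHl; ring]. Qed.

Lemma sumZ_le l f g : (forall x, In x l -> f x <= g x) -> sumZ l f <= sumZ l g.
Proof.
  induction l as [| a l IH]; intros H; [unfold sumZ; simpl; lra |].
  rewrite !sumZ_cons. apply Rplus_le_compat; [apply H; left; reflexivity |].
  apply IH. intros; apply H; right; assumption.
Qed.

Lemma sumZ_ext l f g : (forall x, In x l -> f x = g x) -> sumZ l f = sumZ l g.
Proof. intros H. apply Rle_antisym; apply sumZ_le; intros x Hx; rewrite H; auto; lra. Qed.

Lemma sumZ_plus l f g : sumZ l (fun x => f x + g x) = sumZ l f + sumZ l g.
Proof. induction l; [unfold sumZ; simpl; ring | rewrite !sumZ_cons, IHl; ring]. Qed.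

Lemma sumZ_scal l c f : sumZ l (fun x => c * f x) = c * sumZ l f.
Proof. induction l; [unfold sumZ; simpl; ring | rewrite !sumZ_cons, IHl; ring]. Qed.

Lemma sumZ_swap l l' (F : Z -> Z -> R) :
  sumZ l (fun a => sumZ l' (fun b => F a b)) = sumZ l' (fun b => sumZ l (fun a => F a b)).
Proof.
  induction l as [| a l IH].
  - induction l' as [| b l' IH']; [reflexivity | rewrite sumZ_cons, <- IH'; unfold sumZ; simpl; ring].
  - rewrite sumZ_cons, IH, <- sumZ_plus. reflexivity.
Qed.

Lemma sumZ_perm l l' f : Permutation l l' -> sumZ l f = sumZ l' f.
Proof.
  induction 1; rewrite ?sumZ_cons; try congruence; try lra.
Qed.

Lemma sumZ_indicator_le l (h : Z -> Z) B : NoDup l -> 0 <= B ->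
  (forall x y, In x l -> In y l -> h x = 0%Z -> h y = 0%Z -> x = y) ->
  sumZ l (fun k => if Z.eq_dec (h k) 0 then B else 0) <= B.
Proof.
  induction l as [| a l IH]; intros ND HB U; [unfold sumZ; simpl; lra |].
  rewrite sumZ_cons. apply NoDup_cons_iff in ND as [Na ND].
  destruct (Z.eq_dec (h a) 0) as [E | E].
  - assert (Hzero : sumZ l (fun k => if Z.eq_dec (h k) 0 then B else 0) = sumZ l (fun _ => 0)).
    { apply sumZ_ext. intros y Hy. destruct (Z.eq_dec (h y) 0) as [E' | E']; [| reflexivity].
      exfalso. apply Na. replace a with y; [assumption |]. apply U; simpl; auto. }
    rewrite Hzero, sumZ_0. lra.
  - assert (sumZ l (fun k => if Z.eq_dec (h k) 0 then B else 0) <= B)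
      by (apply IH; auto; intros; apply U; simpl; auto).
    lra.
Qed.

Lemma in_range N k : In k (range N) <-> (0 < k < N)%Z.
Proof.
  unfold range. rewrite in_map_iff. split.
  - intros [n [<- Hn]]. apply in_seq in Hn. lia.
  - intros Hk. exists (Z.to_nat k). split; [lia |]. apply in_seq. lia.
Qed.

Lemma range_NoDup N : NoDup (range N).
Proof. apply NoDup_map_NoDup_ForallPairs; [intros x y _ _ E; lia | apply seq_NoDup]. Qed.

Lemma range_reflect_perm N : Permutation (map (fun k => N - k)%Z (range N)) (range N).
Proof.
  apply NoDup_Permutation.
  - apply NoDup_map_NoDup_ForallPairs; [intros x y _ _ E; lia | apply range_NoDup].
  - apply range_NoDup.
  - intros k. rewrite in_map_iff, in_range. split.
    + intros [j [<- Hj]]. apply in_range in Hj. lia.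
    + intros Hk. exists (N - k)%Z. split; [ring | apply in_range; lia].
Qed.

Lemma sumZ_range_reflect N f : sumZ (range N) (fun k => f (N - k)%Z) = sumZ (range N) f.
Proof. rewrite <- sumZ_map. apply sumZ_perm, range_reflect_perm. Qed.

Lemma range_divide_inj N x y :
  In x (range N) -> In y (range N) -> (N | x - y)%Z -> x = y.
Proof.
  rewrite !in_range. intros Hx Hy [q Hq].
  destruct (Z.lt_trichotomy q 0) as [Hq0 | [-> | Hq0]]; nia.
Qed.

(* k2 enters the congruence with coefficient +-1, so for fixed k3, k4 at most
   one k2 in (0, N) is resonant. *)
Lemma sum3_le N (c : Z -> Z -> Z -> Z) (f : Z -> Z -> Z -> R) (B : Z -> Z -> R) :
  (forall k2 k2' k3 k4, c k2 k3 k4 - c k2' k3 k4 = k2 - k2' \/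
                        c k2 k3 k4 - c k2' k3 k4 = k2' - k2)%Z ->
  (forall k3 k4, In k3 (range N) -> In k4 (range N) -> 0 <= B k3 k4) ->
  (forall k2 k3 k4, In k2 (range N) -> In k3 (range N) -> In k4 (range N) ->
     (c k2 k3 k4 mod N = 0)%Z -> f k2 k3 k4 <= B k3 k4) ->
  sum3 N c f <= sumZ (range N) (fun k3 => sumZ (range N) (fun k4 => B k3 k4)).
Proof.
  intros Hc HB Hf. unfold sum3.
  apply Rle_trans with (sumZ (range N) (fun k2 => sumZ (range N) (fun k3 =>
    sumZ (range N) (fun k4 => if Z.eq_dec (c k2 k3 k4 mod N) 0 then B k3 k4 else 0)))).
  { apply sumZ_le; intros k2 H2; apply sumZ_le; intros k3 H3; apply sumZ_le; intros k4 H4.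
    destruct (Z.eq_dec _ _); [apply Hf |]; auto; lra. }
  rewrite sumZ_swap. apply sumZ_le; intros k3 H3. rewrite sumZ_swap.
  apply sumZ_le; intros k4 H4.
  apply (sumZ_indicator_le _ (fun k2 => c k2 k3 k4 mod N)%Z); [apply range_NoDup | auto |].
  intros x y Hx Hy Ex Ey.
  assert (HN : (N <> 0)%Z) by (apply in_range in Hx; lia).
  apply Z.mod_divide in Ex, Ey; try assumption.
  apply (range_divide_inj N); [assumption | assumption |].
  destruct (Hc x y k3 k4) as [E | E].
  - rewrite <- E. apply Z.divide_sub_r; assumption.
  - replace (x - y)%Z with (- (c x k3 k4 - c y k3 k4))%Z by lia.
    apply Z.divide_opp_r, Z.divide_sub_r; assumption.
Qed.

(** * The double sum of (a + b)^-2 *)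

Definition inv_sq (a : Z) : R := / (IZR a ^ 2).

Lemma inv_sq_nonneg a : 0 <= inv_sq a.
Proof.
  unfold inv_sq. destruct (Req_dec (IZR a) 0) as [E | E].
  - rewrite E, pow_i, Rinv_0 by lia. lra.
  - apply Rlt_le, Rinv_0_lt_compat. rewrite <- Rsqr_pow2. apply Rsqr_pos_lt, E.
Qed.

Lemma sum_inv_sq_shift_le n c : (1 <= c)%Z ->
  sumZ (map Z.of_nat (seq 1 n)) (fun k => inv_sq (c + k)) <= / IZR c - / (IZR c + INR n).
Proof.
  intros Hc. assert (1 <= IZR c) by (apply IZR_le; assumption).
  induction n as [| n IH].
  - simpl. rewrite Rplus_0_r. unfold sumZ; simpl. lra.
  - rewrite seq_S, map_app, sumZ_app. cbn [map]. rewrite sumZ_cons.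
    unfold sumZ at 2; simpl fold_right.
    replace (inv_sq (c + Z.of_nat (1 + n))) with (/ (IZR c + INR n + 1) ^ 2)
      by (unfold inv_sq; rewrite plus_IZR, <- INR_IZR_INZ, plus_INR; simpl (INR 1);
          f_equal; ring).
    rewrite S_INR.
    set (y := IZR c + INR n) in *.
    assert (1 <= y) by (unfold y; pose proof (pos_INR n); lra).
    replace (IZR c + (INR n + 1)) with (y + 1) by (unfold y; ring).
    assert (/ (y + 1) ^ 2 <= / y - / (y + 1)).
    { replace (/ y - / (y + 1)) with (/ (y * (y + 1))) by (field; lra).
      apply Rinv_le_contravar; nra. }
    lra.
Qed.

Lemma inv_le_ln_step y : 0 < y -> / (y + 1) <= ln (y + 1) - ln y.
Proof.
  intros Hy. pose proof (exp_ineq1_le (ln y - ln (y + 1))) as H.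
  rewrite Rminus_def, exp_plus, exp_Ropp, !exp_ln in H by lra.
  replace (y * / (y + 1)) with (1 - / (y + 1)) in H by (field; lra). lra.
Qed.

Lemma harmonic_le_ln n :
  sumZ (map Z.of_nat (seq 1 (S n))) (fun k => / IZR k) <= 1 + ln (INR (S n)).
Proof.
  induction n as [| n IH].
  - unfold sumZ. simpl. rewrite ln_1, Rinv_1. lra.
  - rewrite seq_S, map_app, sumZ_app. cbn [map]. rewrite sumZ_cons.
    unfold sumZ at 2; simpl fold_right.
    rewrite <- INR_IZR_INZ.
    replace (INR (1 + S n)) with (INR (S n) + 1) by (rewrite plus_INR; simpl; ring).
    replace (INR (S (S n))) with (INR (S n) + 1) by (rewrite (S_INR (S n)); ring).
    pose proof (inv_le_ln_step (INR (S n)) ltac:(apply lt_0_INR; lia)). lra.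
Qed.

Lemma sum_inv_sq_add_le N : (2 <= N)%Z ->
  sumZ (range N) (fun a => sumZ (range N) (fun b => inv_sq (a + b))) <= 1 + ln (IZR N).
Proof.
  intros HN.
  apply Rle_trans with (sumZ (range N) (fun a => / IZR a)).
  - apply sumZ_le. intros a Ha. apply in_range in Ha.
    pose proof (sum_inv_sq_shift_le (Z.to_nat N - 1) a ltac:(lia)).
    assert (0 < IZR a) by (apply IZR_lt; lia).
    assert (0 < / (IZR a + INR (Z.to_nat N - 1))).
    { apply Rinv_0_lt_compat. pose proof (pos_INR (Z.to_nat N - 1)). lra. }
    unfold range. lra.
  - unfold range. replace (Z.to_nat N - 1)%nat with (S (Z.to_nat N - 2)) by lia.
    eapply Rle_trans; [apply harmonic_le_ln |].
    assert (Hlt : INR (S (Z.to_nat N - 2)) < IZR N) by (rewrite INR_IZR_INZ; apply IZR_lt; lia).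
    assert (Hpos : 0 < INR (S (Z.to_nat N - 2))) by (apply lt_0_INR; lia).
    pose proof (ln_increasing _ _ Hpos Hlt). lra.
Qed.

(* Replacing a by N - a and b by N - b independently, so that it dominates
   inv_sq (min a (N - a) + min b (N - b)) while its double sum is four times
   that of inv_sq (a + b). *)
Definition reflected_inv_sq (N a b : Z) : R :=
  inv_sq (a + b) + inv_sq (a + (N - b)) + inv_sq ((N - a) + b) + inv_sq ((N - a) + (N - b)).

Lemma sum_reflected_inv_sq N :
  sumZ (range N) (fun a => sumZ (range N) (fun b => reflected_inv_sq N a b))
  = 4 * sumZ (range N) (fun a => sumZ (range N) (fun b => inv_sq (a + b))).
Proof.
  unfold reflected_inv_sq.
  rewrite (sumZ_ext _ _ (fun a => sumZ (range N) (fun b => inv_sq (a + b)) +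
      sumZ (range N) (fun b => inv_sq (a + b)) + sumZ (range N) (fun b => inv_sq ((N - a) + b)) +
      sumZ (range N) (fun b => inv_sq ((N - a) + b)))).
  2: { intros a _. rewrite !sumZ_plus, !(sumZ_range_reflect N (fun b => inv_sq (_ + b))).
       reflexivity. }
  rewrite !sumZ_plus, (sumZ_range_reflect N (fun a => sumZ (range N) (fun b => inv_sq (a + b)))).
  ring.
Qed.

Lemma ln_ge_half N : (2 <= N)%Z -> / 2 <= ln (IZR N).
Proof.
  intros HN. pose proof ln_lt_2.
  assert (H2 : 2 <= IZR N) by (apply IZR_le; assumption).
  destruct (Req_dec (IZR N) 2) as [-> | Hne]; [lra |].
  pose proof (ln_increasing 2 (IZR N) ltac:(lra) ltac:(lra)). lra.
Qed.

(** * Frequencies and coefficients *)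

Definition theta (N k : Z) : R := PI * IZR k / IZR N.

Definition ssin (N k : Z) : R := Rabs (sin (theta N k)).

Definition freq_scale (kappa m : R) : R := 2 * sqrt (kappa / m).

Lemma omega_ssin kappa m N k : omega kappa m N k = freq_scale kappa m * ssin N k.
Proof. reflexivity. Qed.

Lemma freq_scale_pos kappa m : 0 < kappa -> 0 < m -> 0 < freq_scale kappa m.
Proof.
  intros. unfold freq_scale.
  assert (0 < sqrt (kappa / m)) by (apply sqrt_lt_R0, Rdiv_lt_0_compat; assumption). lra.
Qed.

Lemma theta_add3 N a b c : theta N (a + b + c) = theta N a + theta N b + theta N c.
Proof. unfold theta. rewrite !plus_IZR. unfold Rdiv. ring. Qed.

Lemma ssin_opp N k : ssin N (- k) = ssin N k.
Proof.
  unfold ssin, theta. rewrite opp_IZR.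
  replace (PI * - IZR k / IZR N) with (- (PI * IZR k / IZR N)) by (unfold Rdiv; ring).
  rewrite sin_neg, Rabs_Ropp. reflexivity.
Qed.

Lemma theta_bounds N k : (0 < k < N)%Z -> 0 < theta N k < PI.
Proof.
  intros Hk. unfold theta.
  assert (0 < IZR k < IZR N) by (split; apply IZR_lt; lia).
  pose proof PI_RGT_0. split.
  - apply Rdiv_lt_0_compat; nra.
  - apply (Rmult_lt_reg_r (IZR N)); [lra |].
    unfold Rdiv. rewrite Rmult_assoc, Rinv_l by lra. nra.
Qed.

Lemma ssin_pos N k : (0 < k < N)%Z -> 0 < ssin N k.
Proof.
  intros Hk. destruct (theta_bounds N k Hk). unfold ssin.
  rewrite Rabs_pos_eq; apply sin_gt_0 || (apply Rlt_le, sin_gt_0); assumption.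
Qed.

Lemma ssin_le_1 N k : ssin N k <= 1.
Proof. unfold ssin. apply Rabs_le, SIN_bound. Qed.

Lemma ssin_congr N a b : (N <> 0)%Z -> ((a - b) mod N = 0)%Z -> ssin N a = ssin N b.
Proof.
  intros HN Hab. apply Z.mod_divide in Hab as [q Hq]; [| assumption].
  unfold ssin. replace (theta N a) with (theta N b + IZR q * PI).
  - apply Rabs_sin_add_int_PI.
  - unfold theta. replace a with (b + q * N)%Z by lia. rewrite plus_IZR, mult_IZR.
    field. apply not_0_IZR. assumption.
Qed.

Lemma omega_opp kappa m N k : omega kappa m N (- k) = omega kappa m N k.
Proof. rewrite !omega_ssin, ssin_opp. reflexivity. Qed.

Lemma omega_nonneg kappa m N k : 0 <= omega kappa m N k.
Proof.
  unfold omega. pose proof (sqrt_pos (kappa / m)).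
  apply Rmult_le_pos; [lra | apply Rabs_pos].
Qed.

Lemma Rabs_iota_le_1 N x : Rabs (iota N x) <= 1.
Proof. unfold iota, sgn. apply Rabs_le. destruct (Rlt_dec _ _); [| destruct (Rlt_dec _ _)]; lra. Qed.

Lemma T_sq_le kappa m N k1 k2 k3 k4 :
  T kappa m N k1 k2 k3 k4 ^ 2 <= (3 / (4 * kappa ^ 2)) ^ 2 *
    (omega kappa m N k1 * omega kappa m N k2 * omega kappa m N k3 * omega kappa m N k4).
Proof.
  unfold T.
  set (e := iota N (k2 + k3 + k4) * iota N k2 * iota N k3 * iota N k4).
  set (c0 := 3 / (4 * kappa ^ 2)).
  set (w := omega kappa m N).
  assert (Hw : forall k, sqrt (w k) ^ 2 = w k) by (intros; apply pow2_sqrt, omega_nonneg).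
  replace (- c0 * _ * _ * _ * _ * _) with
    (e * (- c0 * (sqrt (w k1) * sqrt (w k2) * sqrt (w k3) * sqrt (w k4)))) by (unfold e; ring).
  apply Rle_trans with ((- c0 * (sqrt (w k1) * sqrt (w k2) * sqrt (w k3) * sqrt (w k4))) ^ 2).
  - apply Rsqr_unit_mult_le, Rabs_mult4_le_1; apply Rabs_iota_le_1.
  - rewrite !Rpow_mult_distr, !Hw. right. ring.
Qed.

Definition amp_bound (kappa m : R) : R := (3 / (4 * kappa ^ 2)) ^ 2 * 32 * freq_scale kappa m ^ 2.

Lemma amp_bound_pos kappa m : 0 < kappa -> 0 < m -> 0 < amp_bound kappa m.
Proof.
  intros Hk Hm. unfold amp_bound. pose proof (freq_scale_pos kappa m Hk Hm).
  assert (0 < 3 / (4 * kappa ^ 2))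
    by (apply Rdiv_lt_0_compat; [| apply Rmult_lt_0_compat, pow_lt]; lra).
  apply Rmult_lt_0_compat; [apply Rmult_lt_0_compat |]; try apply pow_lt; lra.
Qed.

(* ks is the index whose sine is fixed by the resonance: k1 for A1, k2 for A2. *)
Lemma resonant_term_le kappa m N ks ka kb kd t den :
  0 < kappa -> 0 < m -> 0 < ssin N ka -> 0 < ssin N kb -> 0 < ssin N kd ->
  ssin N ks = Rabs (sin (theta N ka + theta N kb + theta N kd)) ->
  t ^ 2 <= (3 / (4 * kappa ^ 2)) ^ 2 *
    (omega kappa m N ks * omega kappa m N ka * omega kappa m N kb * omega kappa m N kd) ->
  den ^ 2 = (omega kappa m N ka + omega kappa m N kb + omega kappa m N kd - omega kappa m N ks) ^ 2 ->
  Rabs (- t / den) ^ 2 <= amp_bound kappa m / (ssin N kb + ssin N kd) ^ 2.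
Proof.
  intros Hk Hm Ha Hb Hd Hs Ht Hden.
  pose proof (pairsum_prod_le_sin_gap (theta N ka) (theta N kb) (theta N kd)) as Hgap.
  fold (ssin N ka) (ssin N kb) (ssin N kd) in Hgap. rewrite <- Hs in Hgap.
  assert (0 < pairsum_prod (ssin N ka) (ssin N kb) (ssin N kd))
    by (unfold pairsum_prod; repeat apply Rmult_lt_0_compat; lra).
  rewrite !omega_ssin in Ht, Hden.
  apply Rsqr_quotient_le with (P := ssin N ks * ssin N ka * ssin N kb * ssin N kd)
    (D := ssin N ka + ssin N kb + ssin N kd - ssin N ks).
  - apply freq_scale_pos; assumption.
  - lra.
  - apply pow_lt. lra.
  - apply pow2_ge_0.
  - eapply Rle_trans; [exact Ht | right; ring].
  - apply resonant_weight_le; try lra. unfold ssin; apply Rabs_pos.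
  - rewrite Hden. ring.
Qed.

Lemma A1_sq_le kappa m N k1 k2 k3 k4 :
  0 < kappa -> 0 < m -> (N <> 0)%Z -> ((k1 - k2 - k3 - k4) mod N = 0)%Z ->
  0 < ssin N k2 -> 0 < ssin N k3 -> 0 < ssin N k4 ->
  Rabs (Defs.A1 kappa m N k1 k2 k3 k4) ^ 2 <= amp_bound kappa m / (ssin N k3 + ssin N k4) ^ 2.
Proof.
  intros Hk Hm HN Hres H2 H3 H4. unfold Defs.A1.
  apply resonant_term_le with (ks := k1) (ka := k2); try assumption.
  - rewrite <- theta_add3. apply ssin_congr; [assumption |].
    replace (k1 - (k2 + k3 + k4))%Z with (k1 - k2 - k3 - k4)%Z by ring. assumption.
  - apply T_sq_le.
  - ring.
Qed.

Lemma A2_sq_le kappa m N k1 k2 k3 k4 :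
  0 < kappa -> 0 < m -> (N <> 0)%Z -> ((k1 - k2 + k3 + k4) mod N = 0)%Z ->
  0 < ssin N k1 -> 0 < ssin N k3 -> 0 < ssin N k4 ->
  Rabs (Defs.A2 kappa m N k1 k2 k3 k4) ^ 2 <= amp_bound kappa m / (ssin N k3 + ssin N k4) ^ 2.
Proof.
  intros Hk Hm HN Hres H1 H3 H4. unfold Defs.A2.
  apply resonant_term_le with (ks := k2) (ka := k1); try assumption.
  - rewrite <- theta_add3. apply ssin_congr; [assumption |].
    replace (k2 - (k1 + k3 + k4))%Z with (- (k1 - k2 + k3 + k4))%Z by ring.
    apply Z_mod_zero_opp_full. assumption.
  - eapply Rle_trans; [apply T_sq_le | rewrite omega_opp; right; ring].
  - ring.
Qed.

Lemma A3_sq_le kappa m N k1 k2 k3 k4 :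
  0 < kappa -> 0 < m -> 0 < ssin N k3 -> 0 < ssin N k4 ->
  Rabs (Defs.A3 kappa m N k1 k2 k3 k4) ^ 2 <= amp_bound kappa m / (ssin N k3 + ssin N k4) ^ 2.
Proof.
  intros Hk Hm H3 H4. unfold Defs.A3, amp_bound. rewrite !omega_ssin.
  pose proof (Rabs_pos (sin (theta N k1))). pose proof (Rabs_pos (sin (theta N k2))).
  fold (ssin N k1) (ssin N k2) in *.
  apply Rsqr_quotient_le with (P := ssin N k1 * ssin N k2 * ssin N k3 * ssin N k4)
    (D := ssin N k1 + ssin N k2 + ssin N k3 + ssin N k4).
  - apply freq_scale_pos; assumption.
  - lra.
  - apply pow_lt. lra.
  - apply pow2_ge_0.
  - eapply Rle_trans; [apply T_sq_le | rewrite !omega_ssin; right; ring].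
  - apply nonresonant_weight_le; try lra; apply ssin_le_1.
  - ring.
Qed.

Lemma Ssum_le kappa m N k1 : 0 < kappa -> 0 < m -> (0 < k1 < N)%Z ->
  Ssum kappa m N k1 <= 3 * amp_bound kappa m *
    sumZ (range N) (fun k3 => sumZ (range N) (fun k4 => / (ssin N k3 + ssin N k4) ^ 2)).
Proof.
  intros Hk Hm Hk1.
  assert (HN : (N <> 0)%Z) by lia.
  set (B := fun k3 k4 => amp_bound kappa m / (ssin N k3 + ssin N k4) ^ 2).
  assert (HB : forall k3 k4, In k3 (range N) -> In k4 (range N) -> 0 <= B k3 k4).
  { intros k3 k4 H3 H4. apply in_range in H3, H4. unfold B.
    pose proof (amp_bound_pos kappa m Hk Hm).
    pose proof (ssin_pos N k3 H3); pose proof (ssin_pos N k4 H4).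
    apply Rlt_le, Rdiv_lt_0_compat; [| apply pow_lt]; lra. }
  assert (HsumB : sumZ (range N) (fun k3 => sumZ (range N) (fun k4 => B k3 k4)) =
    amp_bound kappa m *
      sumZ (range N) (fun k3 => sumZ (range N) (fun k4 => / (ssin N k3 + ssin N k4) ^ 2))).
  { rewrite <- sumZ_scal. apply sumZ_ext. intros k3 _. rewrite <- sumZ_scal. reflexivity. }
  unfold Ssum.
  assert (S1 : sum3 N (fun k2 k3 k4 => k1 - k2 - k3 - k4)%Z
      (fun k2 k3 k4 => Rabs (Defs.A1 kappa m N k1 k2 k3 k4) ^ 2)
      <= sumZ (range N) (fun k3 => sumZ (range N) (fun k4 => B k3 k4))).
  { apply sum3_le; [intros; lia | assumption |].
    intros k2 k3 k4 H2 H3 H4 Hres. apply in_range in H2, H3, H4.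
    apply A1_sq_le; auto using ssin_pos. }
  assert (S2 : sum3 N (fun k2 k3 k4 => k1 - k2 + k3 + k4)%Z
      (fun k2 k3 k4 => Rabs (Defs.A2 kappa m N k1 k2 k3 k4) ^ 2)
      <= sumZ (range N) (fun k3 => sumZ (range N) (fun k4 => B k3 k4))).
  { apply sum3_le; [intros; lia | assumption |].
    intros k2 k3 k4 _ H3 H4 Hres. apply in_range in H3, H4.
    apply A2_sq_le; auto using ssin_pos. }
  assert (S3 : sum3 N (fun k2 k3 k4 => k1 + k2 + k3 + k4)%Z
      (fun k2 k3 k4 => Rabs (Defs.A3 kappa m N k1 k2 k3 k4) ^ 2)
      <= sumZ (range N) (fun k3 => sumZ (range N) (fun k4 => B k3 k4))).
  { apply sum3_le; [intros; lia | assumption |].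
    intros k2 k3 k4 _ H3 H4 _. apply in_range in H3, H4.
    apply A3_sq_le; auto using ssin_pos. }
  lra.
Qed.

(** * Summing over the resonances *)

Lemma ssin_ge_ratio N j : (0 < j)%Z -> (2 * j <= N)%Z -> IZR j / IZR N <= ssin N j.
Proof.
  intros Hj Hj2. pose proof PI2_3_2.
  assert (0 < IZR j) by (apply IZR_lt; assumption).
  assert (2 * IZR j <= IZR N) by (rewrite <- mult_IZR; apply IZR_le; assumption).
  assert (Hth : 0 <= theta N j <= PI / 2).
  { unfold theta. split; [apply Rlt_le, Rdiv_lt_0_compat; nra |].
    apply (Rmult_le_reg_r (IZR N)); [lra |]. field_simplify; nra. }
  pose proof (sin_ge_third _ Hth). unfold ssin.
  rewrite Rabs_pos_eq by lra.
  assert (IZR j / IZR N <= theta N j / 3).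
  { unfold theta. apply (Rmult_le_reg_r (3 * IZR N)); [lra |]. field_simplify; nra. }
  lra.
Qed.

Lemma ssin_ge_min N k : (0 < k < N)%Z -> IZR (Z.min k (N - k)) / IZR N <= ssin N k.
Proof.
  intros Hk. destruct (Z.min_spec k (N - k)) as [[Hlt ->] | [Hge ->]].
  - apply ssin_ge_ratio; lia.
  - rewrite <- (ssin_opp N k), (ssin_congr N (- k) (N - k)); [apply ssin_ge_ratio | |]; try lia.
    replace (- k - (N - k))%Z with (- 1 * N)%Z by ring. apply Z_mod_mult.
Qed.

Lemma inv_sq_ssin_le N k3 k4 : (0 < k3 < N)%Z -> (0 < k4 < N)%Z ->
  / (ssin N k3 + ssin N k4) ^ 2 <= IZR N ^ 2 * reflected_inv_sq N k3 k4.
Proof.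
  intros H3 H4.
  pose proof (ssin_ge_min N k3 H3); pose proof (ssin_ge_min N k4 H4).
  set (j3 := Z.min k3 (N - k3)) in *; set (j4 := Z.min k4 (N - k4)) in *.
  assert (HN : 0 < IZR N) by (apply IZR_lt; lia).
  assert (Hj : 0 < IZR j3 + IZR j4) by (rewrite <- plus_IZR; apply IZR_lt; lia).
  assert (Hrefl : inv_sq (j3 + j4) <= reflected_inv_sq N k3 k4).
  { pose proof (inv_sq_nonneg (k3 + k4)); pose proof (inv_sq_nonneg (k3 + (N - k4)));
    pose proof (inv_sq_nonneg ((N - k3) + k4)); pose proof (inv_sq_nonneg ((N - k3) + (N - k4))).
    unfold reflected_inv_sq, j3, j4.
    destruct (Z.min_spec k3 (N - k3)) as [[_ ->] | [_ ->]];
    destruct (Z.min_spec k4 (N - k4)) as [[_ ->] | [_ ->]]; lra. }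
  assert (Hs : (IZR j3 + IZR j4) / IZR N <= ssin N k3 + ssin N k4)
    by (replace ((IZR j3 + IZR j4) / IZR N) with (IZR j3 / IZR N + IZR j4 / IZR N)
          by (field; lra); lra).
  assert (Hp : 0 < (IZR j3 + IZR j4) / IZR N) by (apply Rdiv_lt_0_compat; lra).
  apply Rle_trans with (/ ((IZR j3 + IZR j4) / IZR N) ^ 2).
  - apply Rinv_le_contravar; [apply pow_lt; lra | apply pow_incr; lra].
  - replace (/ ((IZR j3 + IZR j4) / IZR N) ^ 2) with (IZR N ^ 2 * inv_sq (j3 + j4))
      by (unfold inv_sq; rewrite plus_IZR; field; lra).
    apply Rmult_le_compat_l; [apply pow2_ge_0 | assumption].
Qed.

Lemma sum_inv_sq_ssin_le N : (2 <= N)%Z ->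
  sumZ (range N) (fun k3 => sumZ (range N) (fun k4 => / (ssin N k3 + ssin N k4) ^ 2))
  <= 12 * IZR N ^ 2 * ln (IZR N).
Proof.
  intros HN.
  apply Rle_trans with
    (sumZ (range N) (fun k3 => sumZ (range N) (fun k4 => IZR N ^ 2 * reflected_inv_sq N k3 k4))).
  { apply sumZ_le; intros k3 H3; apply sumZ_le; intros k4 H4.
    apply in_range in H3, H4. apply inv_sq_ssin_le; assumption. }
  rewrite (sumZ_ext _ _ (fun k3 => IZR N ^ 2 * sumZ (range N) (fun k4 => reflected_inv_sq N k3 k4)))
    by (intros; apply sumZ_scal).
  rewrite sumZ_scal, sum_reflected_inv_sq.
  pose proof (sum_inv_sq_add_le N HN). pose proof (ln_ge_half N HN).
  pose proof (pow2_ge_0 (IZR N)). nra.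
Qed.

Theorem theorem1 :
  forall kappa m : R, 0 < kappa -> 0 < m ->
  exists C : R, 0 < C /\
    forall N k1 : Z, (2 <= N)%Z -> (0 < k1 < N)%Z ->
      Ssum kappa m N k1 <= C * IZR N ^ 2 * ln (IZR N).
Proof.
  intros kappa m Hk Hm.
  pose proof (amp_bound_pos kappa m Hk Hm) as Hamp.
  exists (36 * amp_bound kappa m). split; [lra |].
  intros N k1 HN Hk1.
  pose proof (Ssum_le kappa m N k1 Hk Hm Hk1) as HS.
  pose proof (sum_inv_sq_ssin_le N HN) as Hsum.
  apply Rle_trans with (3 * amp_bound kappa m * (12 * IZR N ^ 2 * ln (IZR N))).
  - eapply Rle_trans; [exact HS |]. apply Rmult_le_compat_l; lra.
  - right. ring.
Qed.
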